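(* Let $B=\mathrm{GF}(p^m)$ and $F=\mathrm{GF}(p^{mt})$. For $u,\alpha\in F$ let $p_{u,\alpha}(x)=\dfrac{\mathrm{Tr}_{F/B}\big(u(x-\alpha)\big)}{x-\alpha}\in F[x]$, and for distinct $\alpha,\beta\in F$ let $Q_{\alpha,\beta}(z)=\mathrm{Tr}_{F/B}\big(z(\beta-\alpha)\big)$. Let $\alpha,\beta\in F$ be distinct and let $z^*\in F$ be a root of $Q_{\alpha,\beta}(z)$ (equivalently of $Q_{\beta,\alpha}(z)$). Then (a) $p_{z^*,\alpha}(\beta)=0$. Moreover, if $t$ is divisible by the characteristic $p$ of $F$ and $B$, then (b) for every $u\in F$, $p_{u,\alpha}(\beta)$ is a root of both $Q_{\alpha,\beta}(z)$ and $Q_{\beta,\alpha}(z)$.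
   Context: $\mathrm{Tr}_{F/B}(x)=\sum_{i=0}^{t-1}x^{|B|^i}$ is the field trace from $F$ to $B$, viewed as a polynomial in $x$; $\mathrm{Tr}_{F/B}(u(x-\alpha))$ is divisible by $x-\alpha$ in $F[x]$, so $p_{u,\alpha}$ is a polynomial (of degree $|B|^{t-1}-1$ when $u\ne0$). *)

From HB Require Import structures.
From mathcomp Require Import all_boot all_algebra all_field.
Set Implicit Arguments. Unset Strict Implicit. Unset Printing Implicit Defensive.
Import GRing.Theory.
Local Open Scope ring_scope.

(* B = GF(q) with q = |B| = p^m, F = GF(q^t).  The relative trace
   Tr_{F/B}(x) = \sum_{i<t} x^(q^i), as a function on F ... *)
Definition trFB (F : finFieldType) (q t : nat) (x : F) : F :=
  \sum_(i < t) x ^+ (q ^ i).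

Definition trFB_poly (F : finFieldType) (q t : nat) (u alpha : F) : {poly F} :=
  \sum_(i < t) (u *: ('X - alpha%:P)) ^+ (q ^ i).

Definition p_ua (F : finFieldType) (q t : nat) (u alpha : F) : {poly F} :=
  trFB_poly q t u alpha %/ ('X - alpha%:P).

Definition Q_ab (F : finFieldType) (q t : nat) (alpha beta z : F) : F :=
  trFB q t (z * (beta - alpha)).

From mathcomp Require Import all_boot all_algebra all_field.
Set Implicit Arguments. Unset Strict Implicit. Unset Printing Implicit Defensive.
Import GRing.Theory.
Local Open Scope ring_scope.

(* Evaluating [Tr(u(X - alpha)) = p_{u,alpha} * (X - alpha)] at beta gives
   [p_{u,alpha}(beta) (beta - alpha) = Tr(u (beta - alpha))], which yields (a)
   at once.  For (b), [p_{u,alpha}(beta) (beta - alpha)] is then a trace, hence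
   lies in B, and the trace of an element c of B is [t c], which vanishes
   when p divides t; Q_{beta,alpha} follows since Tr(-x) = -Tr(x). *)

Section RelativeTrace.

Variables (F : finFieldType) (q t : nat).
Hypothesis q_pchar : [pchar F].-nat q.

Let q_pos i : (0 < q ^ i)%N.
Proof. by case/andP: q_pchar => q_gt0 _; rewrite expn_gt0 q_gt0. Qed.

Lemma trFB_polyE (u alpha : F) :
  trFB_poly q t u alpha =
  (\sum_(i < t) u ^+ (q ^ i) *: ('X - alpha%:P) ^+ (q ^ i).-1) * ('X - alpha%:P).
Proof.
rewrite /trFB_poly big_distrl; apply: eq_bigr => i _ /=.
by rewrite exprZn -scalerAl -exprSr prednK.
Qed.

Lemma mul_horner_p_ua (u alpha beta : F) :
  (p_ua q t u alpha).[beta] * (beta - alpha) = trFB q t (u * (beta - alpha)).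
Proof.
rewrite /p_ua trFB_polyE mulpK ?polyXsubC_eq0 // horner_sum big_distrl.
apply: eq_bigr => i _ /=.
by rewrite hornerZ horner_exp hornerXsubC -mulrA -exprSr prednK // exprMn.
Qed.

Lemma trFBN (x : F) : trFB q t (- x) = - trFB q t x.
Proof.
rewrite /trFB -sumrN; apply: eq_bigr => i _.
by rewrite exprNn_pchar // pnatX q_pchar.
Qed.

Lemma exprn_trFB_pchar (x : F) n : [pchar F].-nat n -> trFB q t x ^+ n = trFB q t (x ^+ n).
Proof.
move=> n_pchar; have zero_expn : 0 ^+ n = 0 :> F.
  by case/andP: n_pchar => n_gt0 _; rewrite expr0n eqn0Ngt n_gt0.
rewrite /trFB (big_morph _ (fun a b => exprDn_pchar a b n_pchar) zero_expn).
by apply: eq_bigr => i _; rewrite -!exprM mulnC.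
Qed.

Hypotheses (t_gt0 : (0 < t)%N) (card_F : (q ^ t)%N = #|F|).

Lemma trFB_exprq (x : F) : trFB q t (x ^+ q) = trFB q t x.
Proof.
rewrite /trFB; case: t t_gt0 card_F => // t' _ card_F'.
rewrite big_ord_recr [RHS]big_ord_recl /= -exprM -expnS card_F' expf_card expr1.
by rewrite addrC; congr (_ + _); apply: eq_bigr => i _; rewrite -exprM -expnS.
Qed.

Lemma exprq_trFB (x : F) : trFB q t x ^+ q = trFB q t x.
Proof. by rewrite exprn_trFB_pchar // trFB_exprq. Qed.

(* The trace is B-valued: B is the fixed field of the Frobenius x |-> x^q. *)
Lemma trFB_trFB (x : F) : trFB q t (trFB q t x) = trFB q t x *+ t.
Proof.
have fixed i : trFB q t x ^+ (q ^ i) = trFB q t x.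
  by elim: i => [|i IHi]; rewrite ?expr1 // expnSr exprM IHi exprq_trFB.
by rewrite {1}/trFB; under eq_bigr do rewrite fixed; rewrite sumr_const card_ord.
Qed.

End RelativeTrace.

Theorem lemma3 (p m t : nat) (F : finFieldType)
  (hp : prime p) (hm : (0 < m)%N) (ht : (0 < t)%N)
  (hchar : p \in [pchar F]) (hcard : #|F| = (p ^ (m * t))%N)
  (alpha beta : F) (hab : alpha != beta) :
  (forall z : F, Q_ab (p ^ m) t alpha beta z = 0 ->
     (p_ua (p ^ m) t z alpha).[beta] = 0)
  /\
  ((p %| t)%N -> forall u : F,
     Q_ab (p ^ m) t alpha beta (p_ua (p ^ m) t u alpha).[beta] = 0 /\
     Q_ab (p ^ m) t beta alpha (p_ua (p ^ m) t u alpha).[beta] = 0).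
Proof.
have q_pchar : [pchar F].-nat (p ^ m)%N by rewrite (eq_pnat _ (pcharf_eq hchar)) pnatX pnat_id.
have card_F : ((p ^ m) ^ t)%N = #|F| by rewrite hcard expnM.
have d_neq0 : beta - alpha != 0 by rewrite subr_eq0 eq_sym.
rewrite /Q_ab; split=> [z|p_dvd_t u].
  by rewrite -mul_horner_p_ua // => /eqP; rewrite mulf_eq0 (negbTE d_neq0) orbF => /eqP.
have t_eq0 : t%:R = 0 :> F by apply/eqP; rewrite -(dvdn_pcharf hchar).
have trace_eq0 : trFB (p ^ m) t ((p_ua (p ^ m) t u alpha).[beta] * (beta - alpha)) = 0.
  by rewrite mul_horner_p_ua // trFB_trFB // -mulr_natr t_eq0 mulr0.
by split=> //; rewrite -opprB mulrN trFBN // trace_eq0 oppr0.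
Qed.
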